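(* Let $T\ge1$, $\alpha>0$, $\Delta\ge0$, and let $\mathcal{M}\subseteq\Delta(\mathcal{Z})$ with loss $L:\mathcal{M}\times\Pi\to\mathbb{R}$. Suppose $\mathsf{Alg}:\mathcal{Z}^T\to\Delta(\Pi)$ is $\alpha$-JDP and for every $M\in\mathcal{M}$, when the data $z_1,\dots,z_T$ are i.i.d. from $M$ and $\pi_{T+1}\sim\mathsf{Alg}(z_1,\dots,z_T)$, we have $\mathbb{P}(L(M,\pi_{T+1})\le\Delta)\ge\tfrac12$. Then $$T\ \ge\ \frac{\log N_{\mathsf{frac}}(\mathcal{M};\Delta)-\log2}{\alpha}.$$
   Context: Two datasets in $\mathcal{Z}^T$ are neighboring if they differ in at most one coordinate. An algorithm $\mathsf{Alg}:\mathcal{Z}^T\to\Delta(\Pi)$ is $\alpha$-JDP if for all neighboring datasets $\mathcal{H},\mathcal{H}'$ and all measurable $E\subseteq\Pi$, $\mathsf{Alg}(\mathcal{H})(E)\le e^\alpha\mathsf{Alg}(\mathcal{H}')(E)$. Fractional covering number: $N_{\mathsf{frac}}(\mathcal{M};\Delta)=\inf_{p\in\Delta(\Pi)}\sup_{M\in\mathcal{M}}\frac1{p(\{\pi:L(M,\pi)\le\Delta\})}$. *)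

From HB Require Import structures.
From mathcomp Require Import all_boot all_order all_algebra.
From mathcomp Require Import all_classical all_reals all_analysis.
Set Implicit Arguments. Unset Strict Implicit. Unset Printing Implicit Defensive.
Import Order.TTheory GRing.Theory Num.Theory.
Local Open Scope classical_set_scope.
Local Open Scope ring_scope.

Definition neighboring (Z : Type) (T : nat) (H H' : T.-tuple Z) : Prop :=
  exists i : 'I_T, forall j : 'I_T, j != i -> tnth H j = tnth H' j.

Definition JDP d d' (Z : measurableType d) (Pi : measurableType d')
    (R : realType) (T : nat) (alpha : R)
    (Alg : T.-tuple Z -> {measure set Pi -> \bar R}) : Prop :=
  forall H H' : T.-tuple Z, neighboring H H' ->
  forall E : set Pi, measurable E ->
    (Alg H E <= (expR alpha)%:E * Alg H' E)%E.

(* Integral of a nonnegative function f : Z^n -> \bar R against the product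
   measure M^{(x) n} (i.i.d. draws z_1,...,z_n ~ M), written as the
   iterated (Tonelli) integral. *)
Fixpoint iid_integral d (Z : measurableType d) (R : realType)
    (M : {measure set Z -> \bar R}) (n : nat) : (n.-tuple Z -> \bar R) -> \bar R :=
  match n with
  | 0 => fun f => f [tuple]
  | n'.+1 => fun f =>
      (\int[M]_z iid_integral M (fun t : n'.-tuple Z => f [tuple of z :: t]))%E
  end.

Definition success_prob d d' (Z : measurableType d) (Pi : measurableType d')
    (R : realType) (T : nat)
    (Alg : T.-tuple Z -> {measure set Pi -> \bar R})
    (M : probability Z R) (LM : Pi -> R) (Delta : R) : \bar R :=
  iid_integral M (fun H => Alg H [set pi | (LM pi <= Delta)%R]).

(* Fractional covering number:
   inf_{p in Delta(Pi)} sup_{M in Mset} 1 / p({pi : L(M,pi) <= Delta})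
   (with 1/0 = +oo), valued in the extended reals. *)
Definition Nfrac d d' (Z : measurableType d) (Pi : measurableType d')
    (R : realType) (Mset : set (probability Z R))
    (L : probability Z R -> Pi -> R) (Delta : R) : \bar R :=
  ereal_inf [set ereal_sup [set ((p [set pi | (L M pi <= Delta)%R])^-1)%E | M in Mset]
            | p in [set: probability Pi R]].

(* Group privacy: changing the T coordinates of a dataset one at a time shows
   that Alg(H) <= e^(alpha T) Alg(H') for any two datasets H, H'.  Hence the
   single distribution p := Alg(H0), for an arbitrary fixed H0, gives every
   good set {pi | L(M,pi) <= Delta} mass at least e^(-alpha T) / 2, so that
   N_frac <= 2 e^(alpha T); taking logarithms gives the bound on T. *)

From HB Require Import structures.
From mathcomp Require Import all_boot all_order all_algebra.
From mathcomp Require Import all_classical all_reals all_analysis.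
Import Order.TTheory GRing.Theory Num.Theory.
Local Open Scope classical_set_scope.
Local Open Scope ring_scope.

Section probability_kernel_at.
Context {dX dY} {X : measurableType dX} {Y : measurableType dY} {R : realType}
  (k : R.-pker X ~> Y) (x : X).

Definition pker_at : set Y -> \bar R := k x.

HB.instance Definition _ := Measure.on pker_at.
HB.instance Definition _ :=
  Measure_isProbability.Build _ _ _ pker_at (prob_kernel (s:=k) x).

End probability_kernel_at.

Section integral_monotone.
Context d (T : measurableType d) (R : realType).
Variable mu : {measure set T -> \bar R}.
Local Open Scope ereal_scope.

(* No measurability is needed: the integral of a nonnegative function is the
   supremum of the integrals of the simple functions below it. *)
Lemma ge0_le_integral_nonmeasurable (f g : T -> \bar R) :
  (forall x, 0 <= f x) -> (forall x, f x <= g x) ->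
  \int[mu]_x f x <= \int[mu]_x g x.
Proof.
move=> f0 fg.
have g0 x : 0 <= g x by exact: le_trans (f0 x) (fg x).
rewrite (ge0_integralTE mu f0) (ge0_integralTE mu g0).
apply: ereal_sup_le => _ [h hf <-]; exists h => //= x.
exact: le_trans (hf x) (fg x).
Qed.

End integral_monotone.

Section iid_integral_bounds.
Context d (Z : measurableType d) (R : realType).
Local Open Scope ereal_scope.

Lemma iid_integral_ge0 (M : {measure set Z -> \bar R}) n
    (f : n.-tuple Z -> \bar R) :
  (forall H, 0 <= f H) -> 0 <= iid_integral M f.
Proof.
elim: n f => [|n IH] f f0 /=; first exact: f0.
by apply: integral_ge0 => z _; apply: IH => t; exact: f0.
Qed.

Lemma iid_integral_le_cst (M : probability Z R) n (f : n.-tuple Z -> \bar R)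
    (c : \bar R) :
  0 <= c -> (forall H, 0 <= f H) -> (forall H, f H <= c) ->
  iid_integral M f <= c.
Proof.
case: c => [c| |]; [|by move=> *; exact: leey|by rewrite leeNy_eq].
elim: n f => [|n IH] f c0 f0 fc /=; first exact: fc.
apply: (@le_trans _ _ (\int[M]_z (cst c%:E) z)).
  apply: ge0_le_integral_nonmeasurable => z.
    by apply: iid_integral_ge0 => t; exact: f0.
  by apply: IH.
rewrite (integral_cst M measurableT) -[leRHS]mule1.
by apply: lee_pmul => //; exact: probability_le1.
Qed.

End iid_integral_bounds.

Section group_privacy.
Context d d' (Z : measurableType d) (Pi : measurableType d') (R : realType).
Context (T : nat) (alpha : R) (Alg : T.-tuple Z -> {measure set Pi -> \bar R}).
Hypothesis Alg_JDP : JDP alpha Alg.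

Definition tuple_interpolate (H H' : T.-tuple Z) (k : nat) : T.-tuple Z :=
  [tuple (if (i < k)%N then tnth H' i else tnth H i) | i < T].

Lemma neighboring_interpolate H H' k : (k < T)%N ->
  neighboring (tuple_interpolate H H' k) (tuple_interpolate H H' k.+1).
Proof.
move=> kT; exists (Ordinal kT) => j neq_jk; rewrite !tnth_mktuple.
rewrite [(j < k.+1)%N]ltnS [(j <= k)%N]leq_eqVlt.
suff /negbTE -> : nat_of_ord j != k by [].
by apply: contra neq_jk => /eqP jk; apply/eqP/val_inj.
Qed.

Lemma JDP_group_privacy H H' E : measurable E ->
  (Alg H E <= (expR (alpha * T%:R))%:E * Alg H' E)%E.
Proof.
move=> mE.
have interpolate0 : tuple_interpolate H H' 0 = H.
  by apply: eq_from_tnth => i; rewrite tnth_mktuple.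
have interpolateT : tuple_interpolate H H' T = H'.
  by apply: eq_from_tnth => i; rewrite tnth_mktuple ltn_ord.
suff: forall k, (k <= T)%N ->
    (Alg H E <= (expR (alpha * k%:R))%:E * Alg (tuple_interpolate H H' k) E)%E.
  by move/(_ T (leqnn T)); rewrite interpolateT.
elim=> [_|k IH kT]; first by rewrite mulr0 expR0 mul1e interpolate0.
apply: le_trans (IH (ltnW kT)) _.
rewrite -addn1 natrD mulrDr mulr1 expRD EFinM -muleA.
apply: lee_pmul => //; rewrite addn1.
by apply: Alg_JDP mE; exact: neighboring_interpolate.
Qed.

Lemma success_prob_le_group_privacy (M : probability Z R) (LM : Pi -> R)
    (Delta : R) (H0 : T.-tuple Z) :
  measurable [set pi | LM pi <= Delta] ->
  (success_prob Alg M LM Delta <=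
   (expR (alpha * T%:R))%:E * Alg H0 [set pi | (LM pi <= Delta)%R])%E.
Proof.
by move=> mE; apply: iid_integral_le_cst => // H; exact: JDP_group_privacy.
Qed.

End group_privacy.

Section covering_number_bound.
Context {d d'} {Z : measurableType d} {Pi : measurableType d'} {R : realType}.
Context {Mset : set (probability Z R)} {L : probability Z R -> Pi -> R}
  {Delta : R}.
Local Open Scope ereal_scope.

Lemma Nfrac_le_inv_mass (p : probability Pi R) (c : R) : (0 < c)%R ->
  (forall M, Mset M -> c%:E <= p [set pi | (L M pi <= Delta)%R]) ->
  Nfrac Mset L Delta <= (c^-1)%:E.
Proof.
move=> c_gt0 mass_ge; apply: le_trans (ereal_inf_lbound _) _; first by exists p.
apply: ge_ereal_sup => _ [M MM <-].
have -> : (c^-1)%:E = (c%:E)^-1 by rewrite inver gt_eqF.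
by rewrite lee_pV2 ?inE ?lee_fin ?(ltW c_gt0) //; exact: mass_ge.
Qed.

End covering_number_bound.

(* [1 <= r] is needed: [fine] maps [+oo] and [-oo] to [0], and [ln 0 = 0]. *)
Lemma ln_fine_le {R : realType} {x : \bar R} {r : R} :
  1 <= r -> (x <= r%:E)%E -> ln (fine x) <= ln r.
Proof.
move=> r_ge1 xr; have [x_le0|x_gt0] := leP (fine x) 0.
  by rewrite ln0 // ln_ge0.
have r_gt0 : 0 < r by exact: lt_le_trans ltr01 r_ge1.
rewrite ler_ln ?posrE //.
by move: xr x_gt0; case: x => [x| |] //= _; rewrite ltxx.
Qed.

Theorem proposition6p5 (d d' : measure_display)
    (Z : measurableType d) (Pi : measurableType d') (R : realType)
    (T : nat) (alpha Delta : R)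
    (Mset : set (probability Z R)) (L : probability Z R -> Pi -> R)
    (Alg : R.-pker (T.-tuple Z) ~> Pi) :
  (1 <= T)%N -> 0 < alpha -> 0 <= Delta ->
  (forall M, Mset M -> measurable_fun [set: Pi] (L M)) ->
  JDP alpha Alg ->
  (forall M, Mset M -> ((1/2)%:E <= success_prob Alg M (L M) Delta)%E) ->
  (Nfrac Mset L Delta < +oo)%E /\
  (ln (fine (Nfrac Mset L Delta)) - ln 2) / alpha <= T%:R.
Proof.
move=> _ alpha_gt0 _ mL Alg_JDP success.
pose K := expR (alpha * T%:R).
have K_ge1 : 1 <= K.
  by apply: le_trans (expR_ge1Dx _); rewrite lerDl mulr_ge0 // ltW.
have twoK_ge1 : 1 <= 2 * K.
  by rewrite (le_trans K_ge1) // ler_peMl ?expR_ge0 ?ler1n.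
pose p := pker_at Alg [tuple point | _ < T].
have Nfrac_le : (Nfrac Mset L Delta <= (2 * K)%:E)%E.
  rewrite -[2 * K]invrK; apply: (Nfrac_le_inv_mass p).
    by rewrite invr_gt0 (lt_le_trans ltr01).
  move=> M MM; rewrite invfM mulrC EFinM lee_pdivrMl ?expR_gt0 // -div1r.
  have mE : measurable [set pi | L M pi <= Delta].
    have := measurable_fun_le measurableT (mL M MM) (measurable_cst Delta).
    by rewrite setTI.
  by apply: le_trans (success M MM) _; exact: success_prob_le_group_privacy.
split; first exact: le_lt_trans Nfrac_le (ltry _).
have := ln_fine_le twoK_ge1 Nfrac_le; rewrite lnM ?posrE ?expR_gt0 // expRK.
by rewrite ler_pdivrMr // lerBlDl (mulrC T%:R).
Qed.
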